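(* Let $\Omega=\mathsf{tt}\Rightarrow\mathsf{tt}$. Then: (1) for every program term $A\in\mathcal L_a$, $A\preceq\Omega$; (2) $\mathsf{tt}\preceq\Omega$ (i.e. $\to_\Omega$ is reflexive in every $\mathcal L$-model); (3) $\Omega\Omega\preceq\Omega$ (i.e. $\to_\Omega$ is transitive). Consequently $\forall\Omega.(\cdot)$ is an S4 modality and $\to_{\Omega^*}=\to_\Omega$ in every $\mathcal L$-model.
   Context: Fix countable, nonempty, pairwise disjoint sets $\mathrm{AtF}$ (atomic formulas), $\mathrm{AtP}$ (atomic programs) and $I$ (agent names). The formulas $\mathcal L_s$ and programs $\mathcal L_a$ of Type PDL ($\tau$PDL) are generated by $\varphi::=p\mid\neg\varphi\mid\forall A.\varphi\mid \mathsf C_\imath A$ and $A::=a\mid\varphi\mid\varphi\Rightarrow\varphi\mid AA\mid A+A\mid A^*$ with $p\in\mathrm{AtF}$, $a\in\mathrm{AtP}$, $\imath\in I$ (a formula used as a program is a test; $AB$ is sequential composition, $A+B$ choice, $\forall A.\varphi$ is the box $[A]\varphi$). Other connectives are abbreviations, e.g. $\varphi\to\psi:=\forall\varphi.\psi$. $\mathsf{tt}$ is a fixed tautology, $\mathsf{ff}=\neg\mathsf{tt}$, $\Omega:=\mathsf{tt}\Rightarrow\mathsf{tt}$, $\mathrm{AtP}_\Omega=\mathrm{AtP}\cup\{\Omega\}$. $\Sigma$ is the set of programs of the forms $a$, $\varphi$, $\varphi\Rightarrow\psi$; $\tilde\Sigma$ the set of programs of the forms $a$, $\varphi\Rightarrow\psi$;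 $\Sigma^+$ the finite nonempty sequential compositions of elements of $\Sigma$. An $\mathcal L$-model $M$ consists of a nonempty set $W$, a relation $\to_a\subseteq W\times W$ for each $a\in\mathrm{AtP}$, a valuation $\rho:\mathrm{AtF}\to2^W$, and for each $\imath\in I$, $w\in W$ a set $\imath^M(w)\subseteq\bigcup\{\to_A:A\in\Sigma^+\}$. Interpretation: $[\![p]\!]=\rho(p)$, $[\![\neg\varphi]\!]=W\setminus[\![\varphi]\!]$, $[\![\forall A.\varphi]\!]=\{w:\forall w'(w\to_Aw'\Rightarrow w'\in[\![\varphi]\!])\}$; $\to_\varphi=\{(w,w):w\in[\![\varphi]\!]\}$, $\to_{AB}=\to_A\circ\to_B$ (first $A$ then $B$), $\to_{A+B}=\to_A\cup\to_B$, $\to_{A^*}=\bigcup_{n\ge0}(\to_A)^n$, $\to_{\varphi\Rightarrow\psi}=\bigcup\{\to_A: A\in\Sigma^+,\ \forall w\in[\![\varphi]\!]\,\forall w'(w\to_Aw'\Rightarrow w'\in[\![\psi]\!])\}$. Capabilities: $[\![\mathsf C_\imath a]\!]=\{w:\to_a\subseteq\imath^M(w)\}$, $[\![\mathsf C_\imath\varphi]\!]=W$, $[\![\mathsf C_\imath(\varphi\Rightarrow\psi)]\!]=\{w:\to_{\varphi\Rightarrow\psi}\subseteq\imath^M(w)\}$, $[\![\mathsf C_\imath(AB)]\!]=\{w\in[\![\mathsf C_\imath A]\!]:\forall w'(w\to_Aw'\Rightarrow w'\in[\![\mathsf C_\imath B]\!])\}$, $[\![\mathsf C_\imath(A+B)]\!]=[\![\mathsf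 C_\imath A]\!]\cap[\![\mathsf C_\imath B]\!]$, $[\![\mathsf C_\imath A^*]\!]=\bigcup\{[\![\varphi]\!]:[\![\varphi]\!]\subseteq[\![\mathsf C_\imath A]\!]\cap[\![\forall A.\varphi]\!]\}$. Normality condition: $\imath^M(w)=\bigcup\{\to_{\varphi\Rightarrow\psi}:w\in[\![\mathsf C_\imath(\varphi\Rightarrow\psi)]\!]\}\cup\bigcup\{\to_a:w\in[\![\mathsf C_\imath a]\!]\}$. We write $w\models^M\varphi$ iff $w\in[\![\varphi]\!]$; $\varphi$ is valid if true at every state of every $\mathcal L$-model; $\varphi\equiv\psi$ means $[\![\varphi]\!]=[\![\psi]\!]$ in every $\mathcal L$-model; $\vartheta\models\chi$ means every state of every model satisfying $\vartheta$ satisfies $\chi$. For programs, $A\preceq B$ means $\to_A\subseteq\to_B$ in every $\mathcal L$-model (for a sequence, $A_1A_2\cdots A_n\preceq B$ refers to the composed relation). *)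

From Stdlib Require Import Classical.
Set Implicit Arguments.

Section Syntax.
Variables (AtF AtP I : Type).

(* formulas L_s and programs L_a of tauPDL *)
Inductive form : Type :=
| FAtom : AtF -> form
| FNeg : form -> form
| FBox : prog -> form -> form
| FCap : I -> prog -> form
with prog : Type :=
| PAt : AtP -> prog
| PTest : form -> prog
| PImp : form -> form -> prog
| PSeq : prog -> prog -> prog
| PCho : prog -> prog -> prog
| PStar : prog -> prog.

Inductive inSigma : prog -> Prop :=
| SigAt : forall a, inSigma (PAt a)
| SigTest : forall f, inSigma (PTest f)
| SigImp : forall f g, inSigma (PImp f g).

Inductive inSigmaPlus : prog -> Prop :=
| SPbase : forall A, inSigma A -> inSigmaPlus A
| SPseq : forall A B, inSigmaPlus A -> inSigmaPlus B -> inSigmaPlus (PSeq A B).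

Definition fimpl (f g : form) : form := FBox (PTest f) g.
End Syntax.

Arguments FAtom {AtF AtP I}.
Arguments PAt {AtF AtP I}.

Fixpoint relpow (W : Type) (n : nat) (R : W -> W -> Prop) : W -> W -> Prop :=
  match n with
  | O => fun x y => x = y
  | S n => fun x y => exists z, R x z /\ relpow n R z y
  end.

(* Because the clauses for
   phi => psi (union over all of Sigma^+) and C_i A^* (union over all formulas)
   are not structurally recursive, the interpretation [[.]] / ->_A is part of the
   model and is required to satisfy every defining clause of the paper. *)
Record model (AtF AtP I : Type) : Type := {
  W : Type;
  W_inh : W;
  ra : AtP -> W -> W -> Prop;
  rho : AtF -> W -> Prop;
  cap : I -> W -> W -> W -> Prop;   (* i^M(w) as a set of pairs *)
  sem : form AtF AtP I -> W -> Prop;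
  rel : prog AtF AtP I -> W -> W -> Prop;
  cap_sub : forall i w x y, cap i w x y ->
      exists A, inSigmaPlus A /\ rel A x y;
  sem_atom : forall p w, sem (FAtom p) w <-> rho p w;
  sem_neg : forall f w, sem (FNeg f) w <-> ~ sem f w;
  sem_box : forall A f w, sem (FBox A f) w <-> (forall w', rel A w w' -> sem f w');
  rel_at : forall a x y, rel (PAt a) x y <-> ra a x y;
  rel_test : forall f x y, rel (PTest f) x y <-> (x = y /\ sem f x);
  rel_seq : forall A B x y, rel (PSeq A B) x y <-> exists z, rel A x z /\ rel B z y;
  rel_cho : forall A B x y, rel (PCho A B) x y <-> (rel A x y \/ rel B x y);
  rel_star : forall A x y, rel (PStar A) x y <-> exists n, relpow n (rel A) x y;
  rel_imp : forall f g x y, rel (PImp f g) x y <->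
      exists A, inSigmaPlus A /\
        (forall u, sem f u -> forall u', rel A u u' -> sem g u') /\ rel A x y;
  sem_cap_at : forall i a w, sem (FCap i (PAt a)) w <->
      (forall x y, rel (PAt a) x y -> cap i w x y);
  sem_cap_test : forall i f w, sem (FCap i (PTest f)) w <-> True;
  sem_cap_imp : forall i f g w, sem (FCap i (PImp f g)) w <->
      (forall x y, rel (PImp f g) x y -> cap i w x y);
  sem_cap_seq : forall i A B w, sem (FCap i (PSeq A B)) w <->
      (sem (FCap i A) w /\ forall w', rel A w w' -> sem (FCap i B) w');
  sem_cap_cho : forall i A B w, sem (FCap i (PCho A B)) w <->
      (sem (FCap i A) w /\ sem (FCap i B) w);
  sem_cap_star : forall i A w, sem (FCap i (PStar A)) w <->
      exists f, (forall u, sem f u -> sem (FCap i A) u /\ sem (FBox A f) u) /\ sem f w;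
  normality : forall i w x y, cap i w x y <->
      ((exists f g, sem (FCap i (PImp f g)) w /\ rel (PImp f g) x y) \/
       (exists a, sem (FCap i (PAt a)) w /\ ra a x y))
}.

Arguments W {AtF AtP I}.
Arguments sem {AtF AtP I}.
Arguments rel {AtF AtP I}.

Definition valid {AtF AtP I : Type} (f : form AtF AtP I) : Prop :=
  forall (M : model AtF AtP I) (w : W M), sem M f w.

Definition preceq {AtF AtP I : Type} (A B : prog AtF AtP I) : Prop :=
  forall (M : model AtF AtP I) (x y : W M), rel M A x y -> rel M B x y.

Definition tt {AtF AtP I : Type} (p0 : AtF) : form AtF AtP I :=
  fimpl (FAtom p0) (FAtom p0).
Definition Omega {AtF AtP I : Type} (p0 : AtF) : prog AtF AtP I :=
  PImp (tt p0) (tt p0).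

Definition countable (T : Type) : Prop := exists f : T -> nat, forall x y, f x = f y -> x = y.


(* In any model, call a pair (x, y) reachable if some program of
   Sigma^+ relates x to y.  Since tt holds everywhere, the side condition in the
   defining clause of ->_(tt => tt) is vacuous, so ->_Omega is exactly
   reachability (rel_Omega).  Reachability is reflexive (via the test tt) and
   transitive (via sequential composition), and by induction on programs it
   contains ->_A for every program A (rel_reachable).  This gives (1), and
   (2), (3) are instances of (1).
   The modal half is generic: K and necessitation hold for the box of any
   program, T for a reflexive one and 4 for a transitive one, and the star of
   a reflexive and transitive relation is that relation itself.  Applied to
   Omega, which is reflexive and transitive by (2) and (3), these give the
   remaining claims. *)

Section Reachability.
Variables (AtF AtP I : Type) (M : model AtF AtP I) (p0 : AtF).

Lemma sem_fimpl (f g : form AtF AtP I) (w : W M) :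
  sem M (fimpl f g) w <-> (sem M f w -> sem M g w).
Proof.
  unfold fimpl. rewrite (sem_box M). split.
  - intros H Hf. apply H. apply (rel_test M). auto.
  - intros H w' Hr. apply (rel_test M) in Hr. destruct Hr as [<- Hf]. auto.
Qed.

Lemma sem_tt (w : W M) : sem M (tt p0) w.
Proof. apply sem_fimpl. auto. Qed.

Definition reachable (x y : W M) : Prop :=
  exists B, inSigmaPlus B /\ rel M B x y.

(* Since tt is valid, ->_Omega is the union of all Sigma^+ relations. *)
Lemma rel_Omega (x y : W M) : rel M (Omega p0) x y <-> reachable x y.
Proof.
  unfold Omega, reachable. rewrite (rel_imp M). split.
  - intros [B [HB [_ Hxy]]]. eauto.
  - intros [B [HB Hxy]]. exists B. repeat split; auto. intros. apply sem_tt.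
Qed.

(* The test tt is in Sigma and relates every state to itself. *)
Lemma reachable_refl (x : W M) : reachable x x.
Proof.
  exists (PTest (tt p0)). split; [constructor; constructor |].
  apply (rel_test M). split; [reflexivity | apply sem_tt].
Qed.

(* Sigma^+ is closed under sequential composition. *)
Lemma reachable_trans (x y z : W M) :
  reachable x y -> reachable y z -> reachable x z.
Proof.
  intros [B1 [S1 R1]] [B2 [S2 R2]]. exists (PSeq B1 B2).
  split; [apply SPseq; auto | apply (rel_seq M); eauto].
Qed.

Lemma relpow_reachable (R : W M -> W M -> Prop) :
  (forall x y, R x y -> reachable x y) ->
  forall n x y, relpow n R x y -> reachable x y.
Proof.
  intros HR n. induction n as [| n IH]; intros x y H; simpl in H.
  - subst. apply reachable_refl.
  - destruct H as [z [Hxz Hzy]]. eapply reachable_trans; eauto.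
Qed.

Lemma rel_reachable (A : prog AtF AtP I) (x y : W M) :
  rel M A x y -> reachable x y.
Proof.
  revert x y. induction A as [a | f | f g | A1 IH1 A2 IH2 | A1 IH1 A2 IH2 | A IH];
    intros x y H.
  - exists (PAt a). split; [constructor; constructor | exact H].
  - exists (PTest f). split; [constructor; constructor | exact H].
  - exists (PImp f g). split; [constructor; constructor | exact H].
  - apply (rel_seq M) in H. destruct H as [z [Hxz Hzy]].
    eapply reachable_trans; eauto.
  - apply (rel_cho M) in H. destruct H; eauto.
  - apply (rel_star M) in H. destruct H as [n H].
    exact (relpow_reachable (rel M A) IH n x y H).
Qed.

End Reachability.

Section BoxModality.
Variables (AtF AtP I : Type).

Lemma box_K (A : prog AtF AtP I) (f g : form AtF AtP I) :
  valid (fimpl (FBox A (fimpl f g)) (fimpl (FBox A f) (FBox A g))).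
Proof.
  intros M w. apply sem_fimpl. intros Hfg. apply sem_fimpl. intros Hf.
  rewrite (sem_box M) in Hfg, Hf |- *. intros w' R.
  specialize (Hfg w' R). rewrite sem_fimpl in Hfg. apply Hfg, Hf, R.
Qed.

Lemma box_nec (A : prog AtF AtP I) (f : form AtF AtP I) :
  valid f -> valid (FBox A f).
Proof. intros Hf M w. apply (sem_box M). intros; apply Hf. Qed.

Lemma box_T (A : prog AtF AtP I) (f : form AtF AtP I) :
  (forall (M : model AtF AtP I) (w : W M), rel M A w w) ->
  valid (fimpl (FBox A f) f).
Proof.
  intros Hrefl M w. apply sem_fimpl. rewrite (sem_box M). intros H. apply H, Hrefl.
Qed.

Lemma box_4 (A : prog AtF AtP I) (f : form AtF AtP I) :
  preceq (PSeq A A) A -> valid (fimpl (FBox A f) (FBox A (FBox A f))).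
Proof.
  intros Htrans M w. apply sem_fimpl. rewrite (sem_box M). intros H.
  apply (sem_box M). intros w' R. apply (sem_box M). intros w'' R'.
  apply H, Htrans, (rel_seq M). eauto.
Qed.

Lemma rel_star_preorder (M : model AtF AtP I) (A : prog AtF AtP I) :
  (forall w : W M, rel M A w w) ->
  (forall x y z : W M, rel M A x y -> rel M A y z -> rel M A x z) ->
  forall x y : W M, rel M (PStar A) x y <-> rel M A x y.
Proof.
  intros Hrefl Htrans x y. rewrite (rel_star M). split.
  - intros [n H]. revert x H. induction n as [| n IH]; intros x H; simpl in H.
    + subst. apply Hrefl.
    + destruct H as [z [Hxz Hzy]]. eauto.
  - intros H. exists 1. simpl. eauto.
Qed.

End BoxModality.

Theorem mainTheorem1 (AtF AtP I : Type)
  (cF : countable AtF) (cP : countable AtP) (cI : countable I)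
  (a0 : AtP) (i0 : I) (p0 : AtF) :
  let Om : prog AtF AtP I := Omega p0 in
  (* (1) *) (forall A : prog AtF AtP I, preceq A Om) /\
  (* (2) *) preceq (PTest (tt p0)) Om /\
  (* (3) *) preceq (PSeq Om Om) Om /\
  (* forall Omega.(.) is an S4 modality: K, T, 4 and necessitation *)
  (forall f g : form AtF AtP I,
      valid (fimpl (FBox Om (fimpl f g)) (fimpl (FBox Om f) (FBox Om g)))) /\
  (forall f : form AtF AtP I, valid (fimpl (FBox Om f) f)) /\
  (forall f : form AtF AtP I, valid (fimpl (FBox Om f) (FBox Om (FBox Om f)))) /\
  (forall f : form AtF AtP I, valid f -> valid (FBox Om f)) /\
  (* ->_{Omega^*} = ->_Omega in every model *)
  (forall (M : model AtF AtP I) (x y : W M),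
      rel M (PStar Om) x y <-> rel M Om x y).
Proof.
  intros Om.
  assert (Omega_top : forall A : prog AtF AtP I, preceq A Om).
  { intros A M x y H. apply rel_Omega, (rel_reachable _ _ _ _ p0 A x y H). }
  assert (Omega_refl : forall (M : model AtF AtP I) (w : W M), rel M Om w w).
  { intros M w. apply (Omega_top (PTest (tt p0))), (rel_test M).
    split; [reflexivity | apply sem_tt]. }
  assert (Omega_trans : forall (M : model AtF AtP I) (x y z : W M),
            rel M Om x y -> rel M Om y z -> rel M Om x z).
  { intros M x y z Hxy Hyz. apply (Omega_top (PSeq Om Om)), (rel_seq M). eauto. }
  split; [exact Omega_top |]. split; [apply Omega_top |]. split; [apply Omega_top |].
  split; [intros f g; apply box_K |].
  split; [intros f; apply box_T, Omega_refl |].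
  split; [intros f; apply box_4, Omega_top |].
  split; [intros f; apply box_nec |].
  intros M; apply rel_star_preorder; [apply Omega_refl | apply Omega_trans].
Qed.
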